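(* Let $f,g:\Theta\times Y\to\mathbb{R}$ be test quantities such that for all $y\in Y$ and $\theta_1,\theta_2\in\Theta$: $g(\theta_1,y)<g(\theta_2,y)\iff f(\theta_1,y)<f(\theta_2,y)$ and $g(\theta_1,y)=g(\theta_2,y)\iff f(\theta_1,y)=f(\theta_2,y)$, and let $\phi$ be a posterior family. Then for all $y\in Y$, $\tilde\theta\in\Theta$, $x\in[0,1]$, $M\in\mathbb{N}$ and $i\in\{0,\dots,M\}$: $r_{\phi,f}(x\mid\tilde\theta,y)=r_{\phi,g}(x\mid\tilde\theta,y)$ and $R_{\phi,f}(i\mid\tilde\theta,y)=R_{\phi,g}(i\mid\tilde\theta,y)$.
   Context: Data space $Y$, parameter space $\Theta$. A posterior family is $\phi:\Theta\times Y\to\mathbb{R}^+$ with $\int_\Theta\phi(\theta\mid y)\,\mathrm{d}\theta=1$ for all $y$; a test quantity is a measurable $f:\Theta\times Y\to\mathbb{R}$. $C_{\phi,f}(s\mid y)=\int_\Theta\mathbb{I}[f(\theta,y)\le s]\phi(\theta\mid y)\,\mathrm{d}\theta$, $D_{\phi,f}(s\mid y)=\int_\Theta\mathbb{I}[f(\theta,y)=s]\phi(\theta\mid y)\,\mathrm{d}\theta$; with $U\sim\mathrm{uniform}[0,1]$, $r_{\phi,f}(x\mid\tilde\theta,y)=\Pr\big(C_{\phi,f}(f(\tilde\theta,y)\mid y)-U\,D_{\phi,f}(f(\tilde\theta,y)\mid y)\le x\big)$. For $M\in\mathbb{N}$, with $\theta_1,\dots,\theta_M$ i.i.d. from $\phi(\cdot\mid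 y)$: $N^{\mathtt{less}}=\sum_m\mathbb{I}[f(\theta_m,y)<f(\tilde\theta,y)]$, $N^{\mathtt{equals}}=\sum_m\mathbb{I}[f(\theta_m,y)=f(\tilde\theta,y)]$, $K$ uniform on $\{0,\dots,N^{\mathtt{equals}}\}$, $N^{\mathtt{total}}=N^{\mathtt{less}}+K$, and $R_{\phi,f}(i\mid\tilde\theta,y)=\Pr(N^{\mathtt{total}}\le i)$. *)

From HB Require Import structures.
From mathcomp Require Import all_boot all_order all_algebra.
From mathcomp Require Import all_classical all_reals all_analysis.
Set Implicit Arguments. Unset Strict Implicit. Unset Printing Implicit Defensive.
Import Order.TTheory GRing.Theory Num.Theory.
Local Open Scope classical_set_scope.
Local Open Scope ring_scope.

Section Defs.
Context {R : realType} {d : measure_display} {T : measurableType d} {Y : Type}.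
Variable mu : {measure set T -> \bar R}.

Definition posterior_family (phi : T -> Y -> R) : Prop :=
  forall y, [/\ forall t, 0 <= phi t y,
             measurable_fun setT (fun t => phi t y) &
             (\int[mu]_t (phi t y)%:E = 1)%E].

Definition Cfun (phi : T -> Y -> R) (f : T -> Y -> R) (s : R) (y : Y) : R :=
  fine (\int[mu]_t ((f t y <= s)%R%:R * phi t y)%:E).
Definition Dfun (phi : T -> Y -> R) (f : T -> Y -> R) (s : R) (y : Y) : R :=
  fine (\int[mu]_t ((f t y == s)%R%:R * phi t y)%:E).

(* r_{phi,f}(x | th, y) = Pr_{U ~ uniform[0,1]} (C - U D <= x) *)
Definition rfun (phi f : T -> Y -> R) (x : R) (th : T) (y : Y) : \bar R :=
  (@lebesgue_measure R) ([set u : R | u \in `[0, 1] /\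
     Cfun phi f (f th y) y - u * Dfun phi f (f th y) y <= x]).

(* Expectation of F(theta_1, ..., theta_M) for theta_m i.i.d. with density p
   w.r.t. mu (iterated integral over the M-fold product). *)
Fixpoint iid_expect (p : T -> R) (M : nat) (F : seq T -> \bar R) : \bar R :=
  match M with
  | 0 => F [::]
  | M'.+1 => (\int[mu]_t ((p t)%:E * iid_expect p M' (fun s => F (t :: s))))%E
  end.

Definition N_less (f : T -> Y -> R) (th : T) (y : Y) (s : seq T) : nat :=
  count (fun t => f t y < f th y) s.
Definition N_equals (f : T -> Y -> R) (th : T) (y : Y) (s : seq T) : nat :=
  count (fun t => f t y == f th y) s.

(* Pr_K (N_less + K <= i), K uniform on {0, ..., N_equals} *)
Definition prob_total_le (nl ne i : nat) : R :=
  (\sum_(k < ne.+1) ((nl + k <= i)%N)%:R) / (ne.+1)%:R.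

Definition Rfun (phi f : T -> Y -> R) (M i : nat) (th : T) (y : Y) : \bar R :=
  iid_expect (fun t => phi t y) M
    (fun s => (prob_total_le (N_less f th y s) (N_equals f th y s) i)%:E).
End Defs.

(* r and R see the test quantity only through the comparisons of f(theta, y)
   with f(th, y): the indicators [f t y <= f th y], [f t y == f th y] and
   [f t y < f th y].  Order-equivalent quantities give the same indicators
   pointwise, so every integrand and every count is literally unchanged. *)

From HB Require Import structures.
From mathcomp Require Import all_boot all_order all_algebra.
From mathcomp Require Import all_classical all_reals all_analysis.
Set Implicit Arguments. Unset Strict Implicit. Unset Printing Implicit Defensive.
Import Order.TTheory GRing.Theory Num.Theory.
Local Open Scope classical_set_scope.
Local Open Scope ring_scope.

Section OrderEquivalence.
Variables (R : realDomainType) (T Y : Type) (f g : T -> Y -> R) (y : Y).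
Hypothesis lt_gf : forall t1 t2, (g t1 y < g t2 y) <-> (f t1 y < f t2 y).
Hypothesis eq_gf : forall t1 t2, (g t1 y = g t2 y) <-> (f t1 y = f t2 y).

Lemma ltr_order_equiv t1 t2 : (f t1 y < f t2 y) = (g t1 y < g t2 y).
Proof. by apply/idP/idP => /lt_gf. Qed.

Lemma eqr_order_equiv t1 t2 : (f t1 y == f t2 y) = (g t1 y == g t2 y).
Proof. by apply/eqP/eqP => /eq_gf. Qed.

Lemma ler_order_equiv t1 t2 : (f t1 y <= f t2 y) = (g t1 y <= g t2 y).
Proof. by rewrite !le_eqVlt eqr_order_equiv ltr_order_equiv. Qed.

End OrderEquivalence.

Section ComparisonInvariance.
Variables (R : realType) (d : measure_display) (T : measurableType d) (Y : Type).
Variables (mu : {measure set T -> \bar R}) (phi f g : T -> Y -> R).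
Variables (th : T) (y : Y).
Hypothesis le_fg : forall t, (f t y <= f th y) = (g t y <= g th y).
Hypothesis eq_fg : forall t, (f t y == f th y) = (g t y == g th y).

Lemma rfun_comparison_invariant x : rfun mu phi f x th y = rfun mu phi g x th y.
Proof.
have eqC : Cfun mu phi f (f th y) y = Cfun mu phi g (g th y) y.
  by congr fine; apply: eq_integral => t _; rewrite le_fg.
have eqD : Dfun mu phi f (f th y) y = Dfun mu phi g (g th y) y.
  by congr fine; apply: eq_integral => t _; rewrite eq_fg.
by rewrite /rfun eqC eqD.
Qed.

Hypothesis lt_fg : forall t, (f t y < f th y) = (g t y < g th y).

Lemma Rfun_comparison_invariant M i : Rfun mu phi f M i th y = Rfun mu phi g M i th y.
Proof.
rewrite /Rfun; congr iid_expect; apply: funext => s.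
by rewrite /N_less /N_equals (eq_count lt_fg) (eq_count eq_fg).
Qed.

End ComparisonInvariance.

Theorem mainTheorem14 (R : realType) (d : measure_display) (T : measurableType d)
  (dY : measure_display) (Y : measurableType dY)
  (mu : {measure set T -> \bar R}) (phi f g : T -> Y -> R) :
  measurable_fun setT (fun p : T * Y => f p.1 p.2) ->
  measurable_fun setT (fun p : T * Y => g p.1 p.2) ->
  (forall y t1 t2, (g t1 y < g t2 y) <-> (f t1 y < f t2 y)) ->
  (forall y t1 t2, (g t1 y = g t2 y) <-> (f t1 y = f t2 y)) ->
  posterior_family mu phi ->
  forall (y : Y) (th : T) (x : R) (M i : nat),
    0 <= x <= 1 -> (i <= M)%N ->
    rfun mu phi f x th y = rfun mu phi g x th y /\
    Rfun mu phi f M i th y = Rfun mu phi g M i th y.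
Proof.
move=> _ _ lt_gf eq_gf _ y th x M i _ _.
have le_fg (t : T) := ler_order_equiv (lt_gf y) (eq_gf y) t th.
have eq_fg (t : T) := eqr_order_equiv (eq_gf y) t th.
have lt_fg (t : T) := ltr_order_equiv (lt_gf y) t th.
split; first exact: rfun_comparison_invariant.
exact: Rfun_comparison_invariant.
Qed.
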